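(* Let $g:\mathbb R\to(-\infty,\infty]$ be convex. Let $T\subseteq\mathbb R$ be an open set which is a countable union of pairwise disjoint bounded open intervals $(a_k,b_k)$, $k\in\mathbb N$, and let $f:T\to(-\infty,\infty]$ be such that for each $k$ the restriction $f|_{(a_k,b_k)}$ is convex and $\lim_{t\to a_k^+}f(t)=g(a_k)$, $\lim_{t\to b_k^-}f(t)=g(b_k)$. Then the function $h:\mathbb R\to(-\infty,\infty]$ defined by $h(t)=\max\{f(t),g(t)\}$ for $t\in T$ and $h(t)=g(t)$ for $t\notin T$ is convex on $\mathbb R$. *)

From HB Require Import structures.
From mathcomp Require Import all_boot all_order all_algebra.
From mathcomp Require Import all_classical all_reals all_analysis.
Set Implicit Arguments. Unset Strict Implicit. Unset Printing Implicit Defensive.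
Import Order.TTheory GRing.Theory Num.Theory.
Local Open Scope classical_set_scope.
Local Open Scope ring_scope.
Local Open Scope ereal_scope.

Definition ext_convex_on (R : realType) (D : set R) (f : R -> \bar R) : Prop :=
  forall x y : R, D x -> D y -> forall l : R, (0 < l < 1)%R ->
    f (l * x + (1 - l) * y)%R <= l%:E * f x + (1 - l)%:E * f y.

Definition glue_max (R : realType) (T : set R) (f g : R -> \bar R) (t : R) : \bar R :=
  if `[< T t >] then maxe (f t) (g t) else g t.

Definition Tunion (R : realType) (K : set nat) (a b : nat -> R) : set R :=
  \bigcup_(k in K) [set` `]a k, b k[].

From HB Require Import structures.
From mathcomp Require Import all_boot all_order all_algebra.
From mathcomp Require Import all_classical all_reals all_analysis.
From mathcomp Require Import ring lra.
Import Order.TTheory GRing.Theory Num.Theory numFieldNormedType.Exports.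
Local Open Scope classical_set_scope.
Local Open Scope ring_scope.
Local Open Scope ereal_scope.

(* Convexity of h amounts to: whenever h lies below a line L at two points
   x < y, it lies below L at every z between them.  If z is outside T, then
   h(z) = g(z) <= L(z) by convexity of g.  If z is in (a_k, b_k), pick
   s < z < t in (a_k, b_k) with f(s) <= L(s) + e and f(t) <= L(t) + e: take
   s = x when x > a_k; otherwise g(a_k) <= L(a_k), and any s close enough to
   a_k works since f tends to g(a_k) there; symmetrically for t.  Convexity of
   f on (a_k, b_k) then gives f(z) <= L(z) + e, for every e > 0. *)

Lemma ext_convex_le_line {R : realType} {D : set R} {f : R -> \bar R}
    {s t z p q : R} :
  ext_convex_on D f -> D s -> D t -> (s <= z <= t)%R ->
  f s <= (p * s + q)%:E -> f t <= (p * t + q)%:E -> f z <= (p * z + q)%:E.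
Proof.
move=> f_cvx Ds Dt /andP[sz zt] fs ft.
have [<-|neq_sz] := eqVneq s z; first by [].
have [->|neq_zt] := eqVneq z t; first by [].
have lt_sz : (s < z)%R by rewrite lt_neqAle neq_sz.
have lt_zt : (z < t)%R by rewrite lt_neqAle neq_zt.
have ts0 : (t - s != 0)%R by rewrite subr_eq0 gt_eqF // (lt_trans lt_sz lt_zt).
set m := ((t - z) / (t - s))%R.
have m01 : (0 < m < 1)%R.
  by rewrite divr_gt0 ?ltr_pdivrMr /=; lra.
have zE : z = (m * s + (1 - m) * t)%R by rewrite /m; field.
apply: le_trans (_ : m%:E * (p * s + q)%:E + (1 - m)%:E * (p * t + q)%:E <= _).
  rewrite zE; apply: le_trans (f_cvx s t Ds Dt m m01) _.
  by apply: leeD; apply: lee_wpmul2l => //; rewrite lee_fin; lra.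
by rewrite -!EFinM -EFinD lee_fin zE; lra.
Qed.

Lemma convex_comb_between (R : realFieldType) (x y l : R) :
  (0 < l < 1)%R -> (x < y)%R -> (x < l * x + (1 - l) * y < y)%R.
Proof.
move=> /andP[l0 l1] xy.
have : (0 < (1 - l) * (y - x))%R by rewrite mulr_gt0 // subr_gt0.
have : (0 < l * (y - x))%R by rewrite mulr_gt0 // subr_gt0.
by move=> ? ?; apply/andP; split; lra.
Qed.

Lemma ext_convex_on_setT_by_lines (R : realType) (h : R -> \bar R) :
  (forall t, h t != -oo) ->
  (forall x y z p q : R, (x < z < y)%R ->
    h x <= (p * x + q)%:E -> h y <= (p * y + q)%:E -> h z <= (p * z + q)%:E) ->
  ext_convex_on setT h.
Proof.
move=> h_ninf h_lines x y _ _ l l01; have [l0 l1] := andP l01.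
have l10 : (0 < 1 - l)%R by lra.
case hxE: (h x) (h_ninf x) => [X| |] // _; last first.
  rewrite gt0_muley ?lte_fin // addye ?leey //.
  by case: (h y) (h_ninf y) => [Y| |] //; rewrite gt0_muley ?lte_fin.
case hyE: (h y) (h_ninf y) => [Y| |] // _; last first.
  by rewrite gt0_muley ?lte_fin // addey ?leey.
have [eq_xy|neq_xy] := eqVneq x y.
  move: hyE; rewrite -eq_xy hxE => -[<-].
  by rewrite -!EFinM -EFinD -!mulrDl subrKC !mul1r hxE.
have yx0 : (y - x != 0)%R by rewrite subr_eq0 eq_sym.
set p := ((Y - X) / (y - x))%R; set q := (X - p * x)%R.
have hxL : h x <= (p * x + q)%:E by rewrite hxE /q subrKC.
have hyL : h y <= (p * y + q)%:E by rewrite hyE (_ : p * y + q = Y)%R // /q /p; field.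
have -> : (l%:E * X%:E + (1 - l)%:E * Y%:E)
        = (p * (l * x + (1 - l) * y) + q)%:E.
  by rewrite -!EFinM -EFinD /q /p; congr (_%:E); field.
case: (ltgtP x y) neq_xy => [xy|yx|->]; rewrite ?eqxx // => _.
- by apply: (h_lines x y) => //; exact: convex_comb_between.
- apply: (h_lines y x) => //.
  rewrite (_ : l * x + (1 - l) * y = (1 - l) * y + (1 - (1 - l)) * x)%R; last by ring.
  by apply: convex_comb_between => //; apply/andP; split; lra.
Qed.

Lemma cvg_le_line {R : realType} {F : set_system R} {FF : Filter F}
    {f : R -> \bar R} {a l p q : R} :
  F --> a -> f t @[t --> F] --> l%:E -> (l < p * a + q)%R ->
  \forall t \near F, f t <= (p * t + q)%:E.
Proof.
move=> F_a /fine_cvgP[f_fin f_cvg] lt_l.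
have line_cvg : (p * t + q)%R @[t --> F] --> (p * a + q)%R.
  by apply: cvgD; [apply: cvgM; [exact: cvg_cst | exact: F_a] | exact: cvg_cst].
have lt0 : (l - (p * a + q) < 0)%R by rewrite subr_lt0.
apply: filterS2 (cvgr_lt _ (cvgB f_cvg line_cvg) _ lt0) f_fin => t.
by rewrite subr_lt0 => /ltW ? /fineK <-; rewrite lee_fin.
Qed.

Lemma le_glue_max_g {R : realType} {T : set R} (f g : R -> \bar R) (t : R) :
  g t <= glue_max T f g t.
Proof. by rewrite /glue_max; case: asboolP => _ //; rewrite le_max lexx orbT. Qed.

Lemma le_glue_max_f {R : realType} {T : set R} (f g : R -> \bar R) (t : R) :
  T t -> f t <= glue_max T f g t.
Proof. by rewrite /glue_max; case: asboolP => // _ _; rewrite le_max lexx. Qed.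

Section glue_max_convex.
Variables (R : realType) (g f : R -> \bar R) (K : set nat) (a b : nat -> R).
Hypotheses (g_ninf : forall t, g t != -oo) (g_cvx : ext_convex_on setT g).
Hypothesis f_cvx : forall k, K k -> ext_convex_on [set` `]a k, b k[] f.
Hypothesis f_cvg_a : forall k, K k -> f t @[t --> (a k)^'+] --> g (a k).
Hypothesis f_cvg_b : forall k, K k -> f t @[t --> (b k)^'-] --> g (b k).

Local Notation h := (glue_max (Tunion K a b) f g).

Lemma g_le_line_between {x y z p q : R} : (x <= z <= y)%R ->
  h x <= (p * x + q)%:E -> h y <= (p * y + q)%:E -> g z <= (p * z + q)%:E.
Proof.
move=> xzy hx hy; apply: ext_convex_le_line g_cvx I I xzy _ _.
- exact: le_trans (le_glue_max_g f g x) hx.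
- exact: le_trans (le_glue_max_g f g y) hy.
Qed.

Lemma g_lt_line_between {x y z p q q' : R} : (x <= z <= y)%R -> (q < q')%R ->
  h x <= (p * x + q)%:E -> h y <= (p * y + q)%:E ->
  exists2 gz : R, g z = gz%:E & (gz < p * z + q')%R.
Proof.
move=> xzy qq' hx hy; have := g_le_line_between xzy hx hy.
case: (g z) (g_ninf z) => [gz| |] // _; rewrite lee_fin => gz_le.
by exists gz => //; lra.
Qed.

Lemma glue_max_left_witness {k : nat} {x y z p q q' : R} : K k ->
  (a k < z < b k)%R -> (x < z < y)%R -> (q < q')%R ->
  h x <= (p * x + q)%:E -> h y <= (p * y + q)%:E ->
  exists2 s, (a k < s < z)%R & f s <= (p * s + q')%:E.
Proof.
move=> Kk /andP[az zb] /andP[xz zy] qq' hx hy.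
have [akx|xak] := ltP (a k) x.
  exists x; first by rewrite akx.
  have Tx : Tunion K a b x by exists k => //=; rewrite in_itv /= akx (lt_trans xz).
  apply: le_trans (le_glue_max_f f g x Tx) (le_trans hx _).
  by rewrite lee_fin lerD2l ltW.
have xay : (x <= a k <= y)%R by rewrite xak (ltW (lt_trans az zy)).
have [ga gaE ga_lt] := g_lt_line_between xay qq' hx hy.
have f_cvg : f t @[t --> (a k)^'+] --> ga%:E by rewrite -gaE; exact: f_cvg_a.
have near_f := cvg_le_line (cvg_at_right_filter cvg_id) f_cvg ga_lt.
have : \forall s \near (a k)^'+, (a k < s < z)%R /\ f s <= (p * s + q')%:E.
  near=> s; split; first (apply/andP; split).
  - by near: s; exact: nbhs_right_gt.
  - by near: s; exact: nbhs_right_lt.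
  - by near: s; exact: near_f.
by move=> /filter_ex[s []]; exists s.
Unshelve. all: by end_near.
Qed.

Lemma glue_max_right_witness {k : nat} {x y z p q q' : R} : K k ->
  (a k < z < b k)%R -> (x < z < y)%R -> (q < q')%R ->
  h x <= (p * x + q)%:E -> h y <= (p * y + q)%:E ->
  exists2 t, (z < t < b k)%R & f t <= (p * t + q')%:E.
Proof.
move=> Kk /andP[az zb] /andP[xz zy] qq' hx hy.
have [ybk|bky] := ltP y (b k).
  exists y; first by rewrite zy.
  have Ty : Tunion K a b y by exists k => //=; rewrite in_itv /= ybk (lt_trans az).
  apply: le_trans (le_glue_max_f f g y Ty) (le_trans hy _).
  by rewrite lee_fin lerD2l ltW.
have xby : (x <= b k <= y)%R by rewrite bky (ltW (lt_trans xz zb)).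
have [gb gbE gb_lt] := g_lt_line_between xby qq' hx hy.
have f_cvg : f t @[t --> (b k)^'-] --> gb%:E by rewrite -gbE; exact: f_cvg_b.
have near_f := cvg_le_line (cvg_at_left_filter cvg_id) f_cvg gb_lt.
have : \forall t \near (b k)^'-, (z < t < b k)%R /\ f t <= (p * t + q')%:E.
  near=> t; split; first (apply/andP; split).
  - by near: t; exact: nbhs_left_gt.
  - by near: t; exact: nbhs_left_lt.
  - by near: t; exact: near_f.
by move=> /filter_ex[t []]; exists t.
Unshelve. all: by end_near.
Qed.

Lemma glue_max_le_line (x y z p q : R) : (x < z < y)%R ->
  h x <= (p * x + q)%:E -> h y <= (p * y + q)%:E -> h z <= (p * z + q)%:E.
Proof.
move=> xzy hx hy; have xzy_le : (x <= z <= y)%R.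
  by case/andP: xzy => xz zy; rewrite !ltW.
rewrite {1}/glue_max; case: asboolP => [[k Kk]|_]; last first.
  exact: g_le_line_between xzy_le hx hy.
rewrite /= in_itv /= => zk; rewrite ge_max (g_le_line_between xzy_le hx hy) andbT.
apply/lee_addgt0Pr => e e0; rewrite -EFinD -addrA.
have qqe : (q < q + e)%R by rewrite ltrDl.
have [s /andP[aks sz] fs] := glue_max_left_witness Kk zk xzy qqe hx hy.
have [t /andP[zt tbk] ft] := glue_max_right_witness Kk zk xzy qqe hx hy.
have [_ zbk] := andP zk.
have Ds : [set` `]a k, b k[] s by rewrite /= in_itv /= aks (lt_trans sz zbk).
have Dt : [set` `]a k, b k[] t.
  by rewrite /= in_itv /= tbk (lt_trans aks (lt_trans sz zt)).
by apply: ext_convex_le_line (f_cvx k Kk) Ds Dt _ fs ft; rewrite !ltW.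
Qed.

End glue_max_convex.

Theorem lemma3p5 (R : realType) (g : R -> \bar R) (K : set nat)
    (a b : nat -> R) (f : R -> \bar R) :
  (forall t, g t != -oo) ->
  ext_convex_on setT g ->
  (forall k, K k -> (a k < b k)%R) ->
  (forall i j, K i -> K j -> i <> j -> [set` `]a i, b i[] `&` [set` `]a j, b j[] = set0) ->
  (forall t, Tunion K a b t -> f t != -oo) ->
  (forall k, K k -> ext_convex_on [set` `]a k, b k[] f) ->
  (forall k, K k -> f t @[t --> (a k)^'+] --> g (a k)) ->
  (forall k, K k -> f t @[t --> (b k)^'-] --> g (b k)) ->
  ext_convex_on setT (glue_max (Tunion K a b) f g).
Proof.
move=> g_ninf g_cvx _ _ _ f_cvx f_cvg_a f_cvg_b.
apply: ext_convex_on_setT_by_lines.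
  move=> t; apply: contra_neq (g_ninf t) => ht.
  by apply/eqP; rewrite -leeNy_eq -ht le_glue_max_g.
exact: glue_max_le_line.
Qed.
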